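(* Let $G=(V,E)$ be a connected undirected graph with labeled nodes $1,\dots,n_l$ ($1\le n_l<n$), edge costs $d_e>0$, and let $p$ be an unlabeled node. For every $\lambda\ge0$, the oriented flow subgraph $G_p(\lambda)$ is a directed acyclic graph.
   Context: Orient each edge arbitrarily; let $A$ be the $n\times m$ signed incidence matrix ($A_{ie}=+1$, $A_{je}=-1$ for $e$ oriented from $i$ to $j$) and $A_u$ its rows indexed by unlabeled nodes $n_l+1,\dots,n$. Let $\vec b_p\in\mathbb R^{n-n_l}$ be zero except $-1$ at the entry of $p$. For $\lambda\ge0$ let $\vec x$ be the unique minimizer of $\frac12\sum_{e=1}^m d_e(x_e^2+\lambda|x_e|)$ subject to $A_u\vec x=\vec b_p$. The flow subgraph $G_p(\lambda)$ consists of all edges $e$ with $x_e\neq0$ and the nodes incident to them; it is oriented by keeping the chosen orientation of $e$ if $x_e>0$ and reversing it if $x_e<0$ (so that the flow is positive on every edge of $G_p(\lambda)$). *)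

From HB Require Import structures.
From mathcomp Require Import all_boot all_order all_algebra.
Set Implicit Arguments. Unset Strict Implicit. Unset Printing Implicit Defensive.
Import Order.TTheory GRing.Theory Num.Theory.
Local Open Scope ring_scope.

(* A graph on nodes 'I_n with m edges; edge e joins src e and dst e and is
   oriented (arbitrarily) from src e to dst e.  Nodes are 0-indexed: the
   labeled nodes 1..n_l of the paper are the nodes i with i < n_l. *)

Definition adj (n m : nat) (src dst : 'I_m -> 'I_n) : rel 'I_n :=
  fun i j => [exists e, ((src e == i) && (dst e == j)) || ((src e == j) && (dst e == i))].

Definition simple_graph (n m : nat) (src dst : 'I_m -> 'I_n) : Prop :=
  (forall e, src e != dst e) /\
  (forall e f, ((src e == src f) && (dst e == dst f)) || ((src e == dst f) && (dst e == src f)) -> e = f).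

Definition connected_graph (n m : nat) (src dst : 'I_m -> 'I_n) : Prop :=
  forall i j, connect (adj src dst) i j.

Definition incidence (R : pzRingType) (n m : nat) (src dst : 'I_m -> 'I_n) : 'M[R]_(n, m) :=
  \matrix_(i, e) ((src e == i)%:R - (dst e == i)%:R).

(* A_u x = b_p : rows of unlabeled nodes (i >= n_l); b_p = -1 at p, 0 elsewhere *)
Definition feasible (R : pzRingType) (n m nl : nat) (src dst : 'I_m -> 'I_n) (p : 'I_n)
  (x : 'cV[R]_m) : Prop :=
  forall i : 'I_n, (nl <= i)%N ->
    (incidence R src dst *m x) i 0 = (if i == p then -1 else 0).

Definition objective (R : numFieldType) (m : nat) (d : 'I_m -> R) (lam : R) (x : 'cV[R]_m) : R :=
  2^-1 * \sum_(e < m) d e * (x e 0 ^+ 2 + lam * `|x e 0|).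

Definition is_minimizer (R : numFieldType) (n m nl : nat) (src dst : 'I_m -> 'I_n)
  (p : 'I_n) (d : 'I_m -> R) (lam : R) (x : 'cV[R]_m) : Prop :=
  feasible nl src dst p x /\
  forall y : 'cV[R]_m, feasible nl src dst p y -> objective d lam x <= objective d lam y.

(* directed edge relation of the oriented flow subgraph G_p(lambda):
   edges with x_e <> 0, oriented along the flow *)
Definition flow_arc (R : numDomainType) (n m : nat) (src dst : 'I_m -> 'I_n)
  (x : 'cV[R]_m) : rel 'I_n :=
  fun i j => [exists e,
    ((0 < x e 0) && (src e == i) && (dst e == j)) ||
    ((x e 0 < 0) && (dst e == i) && (src e == j))].

Definition dag (T : finType) (r : rel T) : Prop :=
  forall i j, r i j -> ~~ connect r j i.

From HB Require Import structures.
From mathcomp Require Import all_boot all_order all_algebra.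
From mathcomp Require Import ring lra.
Import Order.TTheory GRing.Theory Num.Theory.
Set Implicit Arguments. Unset Strict Implicit. Unset Printing Implicit Defensive.
Local Open Scope ring_scope.

(* A directed cycle of G_p(lambda) carries a circulation c that agrees in sign
   with the flow x on every edge where it is nonzero. Since A c = 0, x - t c
   is still feasible, and for t > 0 small enough |t c_e| <= |x_e|, so every
   edge of the cycle carries strictly less flow in absolute value: both the
   quadratic and the l1 part of the cost strictly decrease on those edges and
   are unchanged elsewhere, contradicting the minimality of x. *)

Section FlowCirculation.

Variables (R : numDomainType) (n m : nat) (src dst : 'I_m -> 'I_n).
Implicit Types (x c : 'cV[R]_m) (u : 'I_n).

Definition conformal c x := forall e, c e 0 = 0 \/ 0 < c e 0 * x e 0.

Lemma conformal0 x : conformal 0 x.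
Proof. by move=> e; left; rewrite mxE. Qed.

Lemma conformalZ (t : R) c x : 0 < t -> conformal c x -> conformal (t *: c) x.
Proof.
move=> ht hc e; rewrite mxE -mulrA.
by case: (hc e) => [->|h]; [left; rewrite mulr0 | right; rewrite mulr_gt0].
Qed.

Lemma flow_arc_signed_column x u v : flow_arc src dst x u v ->
  exists e, exists2 sg : R, 0 < sg * x e 0 &
    forall i, sg * incidence R src dst i e = (i == u)%:R - (i == v)%:R.
Proof.
case/existsP=> e /orP[] /andP[/andP[hx /eqP <-] /eqP <-]; exists e.
  by exists 1 => [|i]; rewrite mul1r // mxE ![i == _]eq_sym.
exists (-1) => [|i]; first by rewrite mulN1r oppr_gt0.
by rewrite mulN1r mxE ![i == _]eq_sym opprB.
Qed.

(* The circulation is built edge by edge: each arc of the path adds the signed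
   unit vector of its edge, and the boundary telescopes. *)
Lemma flow_path_circulation x u s : path (flow_arc src dst x) u s ->
  exists c, [/\ forall i, (incidence R src dst *m c) i 0
                          = (i == u)%:R - (i == last u s)%:R,
               conformal c x &
               s != [::] -> exists e, 0 < c e 0 * x e 0].
Proof.
elim: s u => [|v s IH] u /=.
  move=> _; exists 0; split=> //; last exact: conformal0.
  by move=> i; rewrite mulmx0 !mxE subrr.
case/andP=> /flow_arc_signed_column [e [sg hsg hcol]] /IH [c [hbd hconf _]].
pose c' := c + sg *: delta_mx e 0.
have c'E f : c' f 0 = c f 0 + sg * (f == e)%:R by rewrite !mxE eqxx andbT.
have he : 0 < c' e 0 * x e 0.
  rewrite c'E eqxx mulr1 mulrDl.
  by case: (hconf e) => [->|h]; [rewrite mul0r add0r | apply: addr_gt0].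
exists c'; split=> [i|f|_]; last by exists e.
- by rewrite mulmxDr -scalemxAr -colE [LHS]mxE hbd 2!mxE hcol; ring.
- have [->|nfe] := eqVneq f e; first by right.
  by rewrite c'E (negbTE nfe) mulr0 addr0; apply: hconf.
Qed.

Lemma flow_cycle_circulation x u v : flow_arc src dst x u v ->
  connect (flow_arc src dst x) v u ->
  exists c, [/\ incidence R src dst *m c = 0, conformal c x &
               exists e, 0 < c e 0 * x e 0].
Proof.
move=> huv /connectP[s hs hlast].
have hp : path (flow_arc src dst x) u (v :: s) by rewrite /= huv hs.
have [c [hbd hconf /(_ isT) hne]] := flow_path_circulation hp.
exists c; split=> //; apply/matrixP=> i k.
by rewrite ord1 hbd /= -hlast subrr mxE.
Qed.

End FlowCirculation.

Lemma scale_below_support (R : realFieldType) (I : finType) (f g : I -> R) :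
  (forall i, g i = 0 -> f i = 0) ->
  exists2 t : R, 0 < t & forall i, `|t * f i| <= `|g i|.
Proof.
move=> hsupp; pose S := \sum_i `|f i| / `|g i|.
have hS : 0 <= S by apply: sumr_ge0 => i _; rewrite divr_ge0.
exists (1 + S)^-1 => [|i]; first by rewrite invr_gt0; lra.
have [g0|gn0] := eqVneq (g i) 0; first by rewrite (hsupp i g0) mulr0 normr0.
have hfS : `|f i| <= S * `|g i|.
  rewrite -ler_pdivrMr ?normr_gt0 // /S (bigD1 i) //= lerDl.
  by apply: sumr_ge0 => j _; rewrite divr_ge0.
rewrite normrM ger0_norm ?invr_ge0 ?addr_ge0 // mulrC ler_pdivrMr; last by lra.
by have := normr_ge0 (g i); nra.
Qed.

Lemma edge_cost_lt (R : realDomainType) (lam a c : R) :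
  0 <= lam -> 0 < c * a -> `|c| <= `|a| ->
  (a - c) ^+ 2 + lam * `|a - c| < a ^+ 2 + lam * `|a|.
Proof.
move=> hl hca.
have [ha|ha|ha] := ltgtP a 0.
- have hc : c < 0 by case: (ltP c 0) => // hc; nra.
  rewrite (ltr0_norm ha) (ltr0_norm hc) => hle.
  by rewrite (ler0_norm (x := a - c)); [nra | lra].
- have hc : 0 < c by case: (ltP 0 c) => // hc; nra.
  rewrite (gtr0_norm ha) (gtr0_norm hc) => hle.
  by rewrite (ger0_norm (x := a - c)); [nra | lra].
- by move: hca; rewrite ha mulr0 ltxx.
Qed.

Lemma objective_conformal_lt (R : realFieldType) (m : nat) (d : 'I_m -> R)
    (lam : R) (x c : 'cV[R]_m) :
  (forall e, 0 < d e) -> 0 <= lam -> conformal c x ->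
  (forall e, `|c e 0| <= `|x e 0|) -> (exists e, 0 < c e 0 * x e 0) ->
  objective d lam (x - c) < objective d lam x.
Proof.
move=> hd hlam hconf hle [e0 he0].
have cost_lt e : 0 < c e 0 * x e 0 -> (x - c) e 0 ^+ 2 + lam * `|(x - c) e 0|
                                      < x e 0 ^+ 2 + lam * `|x e 0|.
  by move=> hce; rewrite !mxE; apply: edge_cost_lt.
rewrite /objective ltr_pM2l ?invr_gt0 ?ltr0n //.
rewrite (bigD1 e0) // [X in _ < X](bigD1 e0) //=.
apply: ltr_leD; first by rewrite ltr_pM2l // cost_lt.
apply: ler_sum => e _; rewrite ler_pM2l //.
case: (hconf e) => [ce0|/cost_lt/ltW //].
by rewrite !mxE ce0 subr0.
Qed.

Lemma feasibleB_circulation (R : pzRingType) (n m nl : nat)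
    (src dst : 'I_m -> 'I_n) (p : 'I_n) (x c : 'cV[R]_m) :
  incidence R src dst *m c = 0 ->
  feasible nl src dst p x -> feasible nl src dst p (x - c).
Proof. by move=> hc hx i hi; rewrite mulmxBr hc subr0 hx. Qed.

Theorem proposition3 (R : realFieldType) (n m nl : nat)
  (src dst : 'I_m -> 'I_n) (d : 'I_m -> R) (p : 'I_n) (lam : R) (x : 'cV[R]_m) :
  (1 <= nl)%N -> (nl < n)%N ->
  simple_graph src dst -> connected_graph src dst ->
  (forall e, 0 < d e) ->
  (nl <= p)%N ->
  0 <= lam ->
  is_minimizer nl src dst p d lam x ->
  dag (flow_arc src dst x).
Proof.
move=> _ _ _ _ hd _ hlam [hfeas hmin] u v huv; apply/negP => hvu.
have [c [hcirc hconf [e0 he0]]] := flow_cycle_circulation huv hvu.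
have [t ht hbound] : exists2 t : R, 0 < t & forall e, `|t * c e 0| <= `|x e 0|.
  apply: scale_below_support => e xe0.
  by case: (hconf e) => //; rewrite xe0 mulr0 ltxx.
have htc : incidence R src dst *m (t *: c) = 0 by rewrite -scalemxAr hcirc scaler0.
have := hmin _ (feasibleB_circulation htc hfeas); apply/negP; rewrite -ltNge.
apply: objective_conformal_lt => // [|e|]; first exact: conformalZ.
  by rewrite mxE.
by exists e0; rewrite mxE -mulrA mulr_gt0.
Qed.
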